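(* Let $\mathcal{X}$ be a finite set and let $d$ be a metric on $\mathcal{X}$. Then there exists a channel $W:\mathcal{X}\to\mathcal{X}$ that is matched to $d$.
   Context: A channel $W:\mathcal{X}\to\mathcal{X}$ with input and output alphabet $\mathcal{X}$ is given by a conditional probability distribution $\Pr:\mathcal{X}\times\mathcal{X}\to\mathbb{R}$, where $\Pr(x\mid y)=\Pr(x\text{ received}\mid y\text{ sent})\ge 0$ and $\sum_{x\in\mathcal{X}}\Pr(x\mid y)=1$ for every $y\in\mathcal{X}$. All codewords are assumed equally likely. A channel $W$ and a metric $d$ on $\mathcal{X}$ are called matched if for every (nonempty) code $C\subseteq\mathcal{X}$ and every $x\in\mathcal{X}$, $$\operatorname{argmax}_{y\in C}\Pr(x\text{ received}\mid y\text{ sent})=\operatorname{argmin}_{y\in C} d(x,y)$$ (equality of sets), i.e. maximum likelihood decoding on $W$ coincides with nearest neighbor decoding with respect to $d$ for every code. *)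

From HB Require Import structures.
From mathcomp Require Import all_boot all_order all_algebra.
From mathcomp Require Import reals.
Set Implicit Arguments. Unset Strict Implicit. Unset Printing Implicit Defensive.
Import Order.TTheory GRing.Theory Num.Theory.
Local Open Scope ring_scope.

Definition is_metric (R : realType) (X : finType) (d : X -> X -> R) : Prop :=
  [/\ forall x y, 0 <= d x y,
      forall x y, d x y = 0 <-> x = y,
      forall x y, d x y = d y x &
      forall x y z, d x z <= d x y + d y z].

(* A channel W : X -> X, given by W x y = Pr(x received | y sent). *)
Definition is_channel (R : realType) (X : finType) (W : X -> X -> R) : Prop :=
  (forall x y, 0 <= W x y) /\ (forall y, \sum_(x : X) W x y = 1).

Definition argmax_set (R : realType) (X : finType) (C : {set X}) (f : X -> R)
  : {set X} := [set y in C | [forall z in C, f z <= f y]].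
Definition argmin_set (R : realType) (X : finType) (C : {set X}) (f : X -> R)
  : {set X} := [set y in C | [forall z in C, f y <= f z]].

(* W and d are matched: ML decoding = NN decoding for every nonempty code. *)
Definition matched (R : realType) (X : finType) (W d : X -> X -> R) : Prop :=
  forall (C : {set X}) (x : X), C != set0 ->
    argmax_set C (fun y => W x y) = argmin_set C (fun y => d x y).

From mathcomp Require Import all_boot all_order all_algebra.
From mathcomp Require Import reals.
From mathcomp Require Import ring lra.
Set Implicit Arguments. Unset Strict Implicit. Unset Printing Implicit Defensive.
Import Order.TTheory GRing.Theory Num.Theory.
Local Open Scope ring_scope.

(* Maximum-likelihood decoding agrees with nearest-neighbour decoding for every
   code as soon as each row [W x] is a strictly decreasing function of [d x].
   Such a channel is obtained from [delta * (D - d x y)], with [D] an upper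
   bound of [d] and [delta] small, by moving the missing mass of each column
   onto its diagonal entry: this only increases [W x x], which is the likeliest
   entry of row [x] anyway because [d x x = 0 < d x y] for [y != x]. *)

Lemma matched_of_row_order (R : realType) (X : finType) (W d : X -> X -> R) :
  (forall x y z, (W x z <= W x y) = (d x y <= d x z)) -> matched W d.
Proof.
move=> row_order C x _; apply/setP => y; rewrite !inE.
by case: (y \in C) => //=; apply: eq_forallb => z; rewrite row_order.
Qed.

Section DistanceChannel.

Variables (R : realType) (X : finType) (d : X -> X -> R).
Hypothesis d_ge0 : forall x y, 0 <= d x y.
Hypothesis d_eq0 : forall x y, d x y = 0 <-> x = y.

Definition dist_bound : R := \sum_a \sum_b d a b.

Definition col_mass (y : X) : R := \sum_a (dist_bound - d a y).

Definition scale : R := (1 + \sum_b col_mass b)^-1.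

Definition diag_excess (y : X) : R := 1 - scale * col_mass y.

Definition dist_channel (x y : X) : R :=
  scale * (dist_bound - d x y) + (x == y)%:R * diag_excess y.

Lemma dist_le_bound x y : d x y <= dist_bound.
Proof.
rewrite /dist_bound (bigD1 x) //= (bigD1 y) //= -addrA lerDl.
by apply: addr_ge0; apply: sumr_ge0 => *; [|apply: sumr_ge0 => *]; exact: d_ge0.
Qed.

Lemma col_mass_ge0 y : 0 <= col_mass y.
Proof. by apply: sumr_ge0 => a _; rewrite subr_ge0 dist_le_bound. Qed.

Lemma scale_gt0 : 0 < scale.
Proof.
rewrite invr_gt0 ltr_wpDr //; apply: sumr_ge0 => *; exact: col_mass_ge0.
Qed.

Lemma diag_excess_gt0 y : 0 < diag_excess y.
Proof.
have mass_le : col_mass y <= \sum_b col_mass b.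
  by rewrite (bigD1 y) //= lerDl; apply: sumr_ge0 => *; exact: col_mass_ge0.
have total_ge0 : 0 <= \sum_b col_mass b.
  by apply: sumr_ge0 => *; exact: col_mass_ge0.
rewrite /diag_excess /scale subr_gt0 mulrC -ltr_pdivlMr ?mul1r ?invrK //.
  lra.
by rewrite invr_gt0; lra.
Qed.

Lemma dist_channel_offdiag x y : x != y ->
  dist_channel x y = scale * (dist_bound - d x y).
Proof. by move=> /negbTE xy; rewrite /dist_channel xy mul0r addr0. Qed.

Lemma dist_channel_lt_diag x y : x != y -> dist_channel x y < dist_channel x x.
Proof.
move=> xy; rewrite dist_channel_offdiag // /dist_channel eqxx mul1r.
have := diag_excess_gt0 x; have := d_ge0 x y; have := scale_gt0.
have -> : d x x = 0 by exact/d_eq0.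
nra.
Qed.

Lemma dist_channel_ge0 x y : 0 <= dist_channel x y.
Proof.
rewrite /dist_channel; apply: addr_ge0.
  by apply: mulr_ge0; [exact: ltW scale_gt0 | rewrite subr_ge0 dist_le_bound].
by apply: mulr_ge0; [exact: ler0n | exact: ltW (diag_excess_gt0 y)].
Qed.

Lemma dist_channel_colsum y : \sum_x dist_channel x y = 1.
Proof.
rewrite /dist_channel big_split /= -mulr_sumr -/(col_mass y).
rewrite (bigD1 y) //= eqxx mul1r big1 ?addr0.
  by rewrite /diag_excess; ring.
by move=> x /negbTE ->; rewrite mul0r.
Qed.

Lemma dist_channel_row_order x y z :
  (dist_channel x z <= dist_channel x y) = (d x y <= d x z).
Proof.
have dxx : d x x = 0 by exact/d_eq0.
have d_gt0 a b : a != b -> 0 < d a b.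
  by move=> ab; rewrite lt_def d_ge0 andbT; apply: contra ab => /eqP/d_eq0->.
case: (eqVneq x y) => [<-|xy]; case: (eqVneq x z) => [<-|xz].
- by rewrite !lexx.
- by rewrite dxx d_ge0 ltW // dist_channel_lt_diag.
- rewrite dxx [d x y <= 0]leNgt d_gt0 // leNgt dist_channel_lt_diag //.
- by rewrite !dist_channel_offdiag // ler_pM2l ?scale_gt0 // lerD2l lerN2.
Qed.

End DistanceChannel.

Theorem mainTheorem1 (R : realType) (X : finType) (d : X -> X -> R) :
  is_metric d -> exists W : X -> X -> R, is_channel W /\ matched W d.
Proof.
case=> d_ge0 d_eq0 _ _.
exists (dist_channel d); split; [split|].
- exact: dist_channel_ge0 d_ge0.
- exact: dist_channel_colsum.
- exact/matched_of_row_order/(dist_channel_row_order d_ge0 d_eq0).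
Qed.
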